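(* Let $F,K\ge1$ and $0\le Z<F$ be integers such that $\frac{K(F-Z)}{Z+1}$ is an integer, and suppose an RPDA$(F,K,Z)$ exists. Then for every integer $x$ with $0\le x<\frac{Z+1}{F-Z}$ and $x<K$, an RPDA$(F,K-x,Z)$ exists.
   Context: A placement delivery array $S$-PDA$(F,K,Z)$ is an $F\times K$ array $R=(r_{j,k})$, $1\le j\le F$, $1\le k\le K$, over a finite set $S$ such that: (1) each cell is either empty or contains an element of $S$; (2) each column contains exactly $Z$ empty cells; (3) each element of $S$ occurs at most once in each row and at most once in each column; (4) if two distinct nonempty cells satisfy $r_{j_1,k_1}=r_{j_2,k_2}=t\in S$, then the cells $r_{j_1,k_2}$ and $r_{j_2,k_1}$ are empty. An RPDA$(F,K,Z)$ (restricted PDA) is an $S$-PDA$(F,K,Z)$ with $|S|=\left\lceil\frac{K(F-Z)}{Z+1}\right\rceil$. *)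

From mathcomp Require Import all_boot.
Set Implicit Arguments. Unset Strict Implicit. Unset Printing Implicit Defensive.

Definition ceildivn (a b : nat) : nat := (a + b.-1) %/ b.

(* An S-PDA(F,K,Z) with S = 'I_n (a finite set of size n): an F x K array
   whose cells are empty (None) or contain an element of S (Some t). *)
Definition is_PDA (F K Z n : nat) (R : 'I_F -> 'I_K -> option 'I_n) : Prop :=
  (forall k : 'I_K, #|[set j : 'I_F | R j k == None]| = Z) /\
  (forall (j : 'I_F) (k1 k2 : 'I_K) (t : 'I_n),
      R j k1 = Some t -> R j k2 = Some t -> k1 = k2) /\
  (forall (k : 'I_K) (j1 j2 : 'I_F) (t : 'I_n),
      R j1 k = Some t -> R j2 k = Some t -> j1 = j2) /\
  (forall (j1 j2 : 'I_F) (k1 k2 : 'I_K) (t : 'I_n),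
      (j1, k1) <> (j2, k2) -> R j1 k1 = Some t -> R j2 k2 = Some t ->
      R j1 k2 = None /\ R j2 k1 = None).

Definition RPDA_exists (F K Z : nat) : Prop :=
  exists R : 'I_F -> 'I_K -> option 'I_(ceildivn (K * (F - Z)) Z.+1),
    is_PDA Z R.

From mathcomp Require Import all_boot.
From mathcomp Require Import zify.

(* Deleting x columns keeps every PDA axiom, and since K(F - Z) is divisible by
   Z + 1 while x(F - Z) < Z + 1, the required alphabet size
   ceil((K - x)(F - Z)/(Z + 1)) equals K(F - Z)/(Z + 1), the old one. *)

Lemma ceildivn_subn (a b d : nat) :
  0 < d -> d %| a -> b < d -> b <= a -> ceildivn (a - b) d = a %/ d.
Proof.
move=> d_gt0 /dvdnP [q ->] b_lt_d b_le_qd; rewrite /ceildivn mulnK //.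
have -> : q * d - b + d.-1 = q * d + (d.-1 - b) by lia.
by rewrite divnMDl // divn_small ?addn0 //; lia.
Qed.

Lemma is_PDA_comp_col (F K K' Z n : nat) (R : 'I_F -> 'I_K -> option 'I_n)
    (f : 'I_K' -> 'I_K) :
  injective f -> is_PDA Z R -> is_PDA Z (fun j k => R j (f k)).
Proof.
move=> f_inj [empty_col [row_uniq [col_uniq cross]]].
split; [|split; [|split]].
- by move=> k; apply: empty_col.
- by move=> j k1 k2 t A B; apply: f_inj; exact: row_uniq A B.
- by move=> k j1 j2 t A B; exact: col_uniq A B.
- move=> j1 j2 k1 k2 t neq A B; apply: cross A B.
  by case=> eq_j /f_inj eq_k; apply: neq; rewrite eq_j eq_k.
Qed.

Theorem mainTheorem8 (F K Z : nat) :
  1 <= F -> 1 <= K -> Z < F ->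
  Z.+1 %| K * (F - Z) ->
  RPDA_exists F K Z ->
  forall x : nat, x * (F - Z) < Z.+1 -> x < K ->
  RPDA_exists F (K - x) Z.
Proof.
move=> _ _ _ dvd_KFZ [R PDA_R] x small_x x_lt_K.
have xm_le_Km : x * (F - Z) <= K * (F - Z) by rewrite leq_mul2r ltnW ?orbT.
have same_size : ceildivn ((K - x) * (F - Z)) Z.+1 = ceildivn (K * (F - Z)) Z.+1.
  by rewrite mulnBl ceildivn_subn // -[in RHS](subn0 (K * (F - Z))) ceildivn_subn.
rewrite /RPDA_exists same_size.
exists (fun j k => R j (widen_ord (leq_subr x K) k)).
apply: is_PDA_comp_col PDA_R => k k' /(congr1 val) eq_val.
exact: val_inj.
Qed.
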